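(* Let $C$ be a commutative ring, $A$ a $C$-algebra and $n\ge2$. Then $\mathrm{Obst}_{n-1}(A)\supseteq\mathrm{Obst}_n(A)$.
   Context: For $m\ge1$ and each $a\in A$ let $\xi_{1,a},\dots,\xi_{m,a}$ be new commuting central indeterminates, $A[\xi_{m,A}]$ the polynomial algebra over $A$ in all of them, and $I_{m,A}$ the ideal of $A[\xi_{m,A}]$ generated by $a^m+\xi_{1,a}a^{m-1}+\cdots+\xi_{m,a}$, $a\in A$. Define $\mathrm{Obst}_m(A)=A\cap I_{m,A}$. *)

From HB Require Import structures.
From mathcomp Require Import all_boot all_order all_algebra.
From mathcomp Require Import finmap.
From mathcomp.multinomials Require Import monalg.
Set Implicit Arguments.
Unset Strict Implicit.
Unset Printing Implicit Defensive.
Import GRing.Theory.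
Local Open Scope ring_scope.

Definition in_ideal (R : nzRingType) (S : R -> Prop) (x : R) : Prop :=
  exists (n : nat) (p s q : 'I_n -> R),
    (forall k, S (s k)) /\ x = \sum_(k < n) p k * s k * q k.

(* The polynomial algebra A[xi_{m,A}] over A in commuting central
   indeterminates xi_{i,a}, (i,a) in 'I_m * A  (index i : 'I_m stands for the
   paper's index i+1 in {1,..,m}). *)
Definition polyXi (m : nat) (A : nzRingType) :=
  {malg A[{cmonom ('I_m * A)%type}]}.

Definition xi (m : nat) (A : nzRingType) (i : 'I_m) (a : A) : polyXi m A :=
  @mkmalgU _ A (ucm (i, a)) 1.

Definition obst_gen (m : nat) (A : nzRingType) (a : A) : polyXi m A :=
  (a ^+ m)%:MP + \sum_(i < m) xi i a * (a ^+ (m - i.+1))%:MP.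

(* Obst_m(A) = A \cap I_{m,A}, with A embedded as constants *)
Definition Obst (m : nat) (A : nzRingType) (x : A) : Prop :=
  in_ideal (fun g : polyXi m A => exists a : A, g = obst_gen m a) (x%:MP).

From HB Require Import structures.
From mathcomp Require Import all_boot all_order all_algebra.
From mathcomp Require Import finmap.
From mathcomp.multinomials Require Import monalg.
Set Implicit Arguments.
Unset Strict Implicit.
Unset Printing Implicit Defensive.
Import GRing.Theory.
Local Open Scope ring_scope.

(* Specialising every xi_{n,a} to 0 is a ring morphism A[xi_{n,A}] ->
   A[xi_{n-1,A}] fixing A; it maps a^n + xi_{1,a} a^{n-1} + ... + xi_{n,a} to
   a * (a^{n-1} + xi_{1,a} a^{n-2} + ... + xi_{n-1,a}), hence I_{n,A} into
   I_{n-1,A}, and A \cap I_{n,A} into A \cap I_{n-1,A}. *)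

Lemma in_ideal_rmorph (R S : nzRingType) (f : {rmorphism R -> S})
    (P : R -> Prop) (Q : S -> Prop) (x : R) :
  (forall s, P s -> exists c t, Q t /\ f s = c * t) ->
  in_ideal P x -> in_ideal Q (f x).
Proof.
move=> fPQ [N [p [s [q [Ps ->]]]]].
have /fin_all_exists [ct fsE] :
    forall k : 'I_N, exists ct : S * S, Q ct.2 /\ f (s k) = ct.1 * ct.2.
  by move=> k; have [c [t]] := fPQ _ (Ps k); exists (c, t).
exists N, (fun k => f (p k) * (ct k).1), (fun k => (ct k).2), (fun k => f (q k)).
split=> [k|]; first by case: (fsE k).
rewrite rmorph_sum; apply: eq_bigr => k _.
by rewrite !rmorphM; case: (fsE k) => _ ->; rewrite !mulrA.
Qed.

Lemma malgMUU (K : monomType) (R : nzRingType) (c1 c2 : R) (k1 k2 : K) :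
  << c1 *g k1 >> * << c2 *g k2 >> = << c1 * c2 *g mmul k1 k2 >> :> {malg R[K]}.
Proof. exact: fgmulUU. Qed.

Lemma malgC_commU (K : monomType) (R : nzRingType) (c : R) (m : K) :
  GRing.comm (c%:MP : {malg R[K]}) << 1 *g m >>.
Proof. by rewrite /GRing.comm !malgMUU mulm1 mul1m mulr1 mul1r. Qed.

Lemma malgC_mulUA (K : monomType) (R : nzRingType) (c : R) (m : K)
    (p : {malg R[K]}) :
  c%:MP * (<< 1 *g m >> * p) = << 1 *g m >> * (c%:MP * p).
Proof. by rewrite mulrA malgC_commU mulrA. Qed.

Section DropLastVariable.
Variables (A : nzRingType) (n : nat).
Local Notation K := {cmonom ('I_n.+2 * A)%type}.
Local Notation K' := {cmonom ('I_n.+1 * A)%type}.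
Local Notation widen := (widen_ord (leqnSn n.+1)).

Definition cm_last_free (m : K) : bool :=
  all (fun v : ('I_n.+2 * A)%type => v.1 != ord_max) (finsupp m).

Lemma cm_last_freeP (m : K) :
  reflect (forall t, m (ord_max, t) = 0%N) (cm_last_free m).
Proof.
apply: (iffP allP) => [free t | m0 [i t]]; last first.
  by rewrite mem_finsupp /=; apply: contra => /eqP->; rewrite m0.
have /contraNN := free (ord_max, t); rewrite eqxx mem_finsupp => /(_ isT).
by rewrite negbK => /eqP.
Qed.

(* The restriction of m to the variables of index < n.+1; [inord] only serves
   to build a finite support, on which it inverts [widen]. *)
Definition cm_narrow (m : K) : K' :=
  [cmonom m (widen v.1, v.2) | v in
     [fset ((inord (val v.1) : 'I_n.+1), v.2) | v in finsupp m]%fset]%M.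

Lemma cm_narrowE (m : K) v : cm_narrow m v = m (widen v.1, v.2).
Proof.
rewrite /cm_narrow cmE /= fsfun_fun; case: ifP => // v_out.
apply/eqP; apply: contraFT v_out => mv_neq0.
apply/imfsetP; exists (widen v.1, v.2); first by rewrite mem_finsupp eq_sym.
by case: v {mv_neq0} => i t; congr pair; apply/val_inj; rewrite /= inordK.
Qed.

Lemma cm_last_freeM (m1 m2 : K) :
  cm_last_free (mmul m1 m2) = cm_last_free m1 && cm_last_free m2.
Proof.
apply/cm_last_freeP/andP => [m0 | [/cm_last_freeP m10 /cm_last_freeP m20] t].
  by split; apply/cm_last_freeP => t; have /eqP := m0 t;
    rewrite mulcmE addn_eq0 => /andP[/eqP ? /eqP ?].
by rewrite mulcmE m10 m20.
Qed.

Lemma cm_narrowM (m1 m2 : K) :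
  cm_narrow (mmul m1 m2) = mmul (cm_narrow m1) (cm_narrow m2).
Proof. by apply/eqP/cmP => v; rewrite !(mulcmE, cm_narrowE). Qed.

Lemma cm_last_free1 : cm_last_free mone.
Proof. by apply/cm_last_freeP => t; rewrite onecmE. Qed.

Lemma cm_narrow1 : cm_narrow mone = mone.
Proof. by apply/eqP/cmP => v; rewrite !(onecmE, cm_narrowE). Qed.

Definition drop_last_mon (m : K) : polyXi n.+1 A :=
  if cm_last_free m then << 1 *g cm_narrow m >> else 0.

Lemma drop_last_mon_is_mmorphism : mmorphism drop_last_mon.
Proof.
split=> [m1 m2|]; last first.
  by rewrite /drop_last_mon cm_last_free1 cm_narrow1.
rewrite /drop_last_mon cm_last_freeM cm_narrowM.
by case: cm_last_free; case: cm_last_free; rewrite ?mulr0 ?mul0r // malgMUU mulr1.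
Qed.

HB.instance Definition _ := isMultiplicative.Build K (polyXi n.+1 A) drop_last_mon
  drop_last_mon_is_mmorphism.

Definition drop_last : polyXi n.+2 A -> polyXi n.+1 A :=
  mmap (@malgC K' A) drop_last_mon.

HB.instance Definition _ :=
  GRing.Additive.copy drop_last (mmap (@malgC K' A) drop_last_mon).

Lemma drop_last_is_monoid_morphism : monoid_morphism drop_last.
Proof.
have commr_drop (g : polyXi n.+2 A) (m m' : K) :
    GRing.comm (g@_m)%:MP (drop_last_mon m').
  rewrite /drop_last_mon; case: cm_last_free; last exact: commr0.
  exact: malgC_commU.
by have [dropM drop1] := commr_mmap_is_multiplicative commr_drop; split.
Qed.

HB.instance Definition _ :=
  GRing.isMonoidMorphism.Build (polyXi n.+2 A) (polyXi n.+1 A) drop_last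
    drop_last_is_monoid_morphism.

Lemma drop_lastM : {morph drop_last : p q / p * q}.
Proof. exact: rmorphM. Qed.

Lemma drop_lastC c : drop_last c%:MP = c%:MP.
Proof. exact: mmapC. Qed.

Lemma drop_last_xi_last a : drop_last (xi ord_max a) = 0.
Proof.
rewrite /drop_last /xi mmapU /drop_last_mon.
case: cm_last_freeP => [/(_ a)|]; last by rewrite mulr0.
by rewrite ucmE eqxx.
Qed.

Lemma drop_last_xi_widen (i : 'I_n.+1) a : drop_last (xi (widen i) a) = xi i a.
Proof.
rewrite /drop_last /xi mmapU /drop_last_mon /= mpolyC1E mul1r.
case: cm_last_freeP => [_ | []]; last first.
  move=> b; rewrite ucmE xpair_eqE; case: eqP => //= /(congr1 val) /= i_max.
  by move: (ltn_ord i); rewrite i_max ltnn.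
suff -> : cm_narrow (ucm (widen i, a)) = ucm (i, a) by [].
by apply/eqP/cmP => -[j b]; rewrite cm_narrowE !ucmE !xpair_eqE.
Qed.

End DropLastVariable.

Lemma drop_last_obst_gen (A : nzRingType) (n : nat) (a : A) :
  drop_last (obst_gen n.+2 a) = a%:MP * obst_gen n.+1 a.
Proof.
(* The goal is split by [congr] before rewriting: a failed match of two
   distinct [xi] terms unfolds their finitely supported monomials and does not
   terminate in practice. *)
have drop_term (i : 'I_n.+2) :
  drop_last (xi i a * (a ^+ (n.+2 - i.+1))%:MP) =
    drop_last (xi i a) * (a ^+ (n.+2 - i.+1))%:MP.
  by rewrite drop_lastM; congr (_ * _); exact: drop_lastC.
rewrite /obst_gen rmorphD /= drop_lastC rmorph_sum /= big_ord_recr /= mulrDr.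
congr (_ + _); first by rewrite -mpolyCM -exprS.
rewrite -[RHS]addr0 mulr_sumr; congr (_ + _); last first.
  by rewrite drop_term drop_last_xi_last mul0r.
apply: eq_bigr => i _; rewrite drop_term drop_last_xi_widen.
apply: etrans (esym (malgC_mulUA a (ucm (i, a)) _)); congr (_ * _).
by rewrite -mpolyCM -exprS /= subSn.
Qed.

Theorem lemma2p24 (C : comNzRingType) (A : algType C) (n : nat) :
  (2 <= n)%N -> forall x : A, Obst n x -> Obst n.-1 x.
Proof.
case: n => [|[|n]] // _ x obst_x.
rewrite /Obst -(drop_lastC n x).
apply: in_ideal_rmorph obst_x => _ [a ->].
by exists a%:MP, (obst_gen n.+1 a); split; [exists a | exact: drop_last_obst_gen].
Qed.
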